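(* Let $R$ be a Bézout domain and let $A,B,C\in R^{n\times n}$ satisfy $ABA=ACA$. If $AB$ and $CA$ are group invertible, then $(AB)(AB)^{\#}$ is similar to $(CA)(CA)^{\#}$.
   Context: A Bézout domain is an integral domain in which every finitely generated ideal is principal. A matrix $M\in R^{n\times n}$ is group invertible if there exists $X\in R^{n\times n}$ with $MX=XM$, $XMX=X$, $MXM=M$; such $X$ is unique and denoted $M^{\#}$. Two matrices $M,N\in R^{n\times n}$ are similar if $M=S^{-1}NS$ for some invertible $S\in R^{n\times n}$. *)

From mathcomp Require Import all_boot all_algebra.
Set Implicit Arguments. Unset Strict Implicit. Unset Printing Implicit Defensive.
Import GRing.Theory.
Local Open Scope ring_scope.

Definition in_fg_ideal (R : comRingType) (s : seq R) (x : R) : Prop :=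
  exists c : 'I_(size s) -> R, x = \sum_(i < size s) c i * s`_i.

Definition bezout_domain (R : idomainType) : Prop :=
  forall s : seq R, exists d : R,
    forall x : R, in_fg_ideal s x <-> exists r : R, x = r * d.

Definition is_group_inverse (R : ringType) (n : nat) (M X : 'M[R]_n) : Prop :=
  [/\ M *m X = X *m M, X *m M *m X = X & M *m X *m M = M].

Definition group_invertible (R : ringType) (n : nat) (M : 'M[R]_n) : Prop :=
  exists X, is_group_inverse M X.

Definition similar_mx (R : comUnitRingType) (n : nat) (M N : 'M[R]_n) : Prop :=
  exists2 S : 'M[R]_n, S \in unitmx & M = invmx S *m N *m S.

From mathcomp Require Import all_boot all_algebra ring.
Set Implicit Arguments. Unset Strict Implicit. Unset Printing Implicit Defensive.
Import GRing.Theory.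
Local Open Scope ring_scope.

(* (AB)(AB)^# and (CA)(CA)^# are idempotent, and over a Bezout domain every
   idempotent P is similar to a partial identity pid_mx r.  Indeed, 2x2
   transformations [[x, y], [-b, a]] with xa + yb = 1 bring a nonzero column
   w = Pw of P to a multiple d e_0 of the first basis vector; conjugating P
   accordingly gives an idempotent fixing d e_0, hence e_0 (cancel d in the
   domain), i.e. one of the form [[1, r], [0, P']]; it is similar to
   diag(1, P'), and one recurses on the idempotent P'.  The size r is the rank
   of P over the field of fractions, and there
   rank (AB)(AB)^# = rank AB = rank ABA = rank ACA = rank CA = rank (CA)(CA)^#. *)

Section Similarity.
Variables (R : comUnitRingType) (n : nat).
Implicit Types M N K S T : 'M[R]_n.

Lemma similar_mx_intro M N S T :
  T *m S = 1%:M -> M = T *m N *m S -> similar_mx M N.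
Proof.
move=> TS ->; have [_ Su] := mulmx1_unit TS.
exists S => //; congr (_ *m _ *m _).
by rewrite -[LHS]mulmx1 -(mulmxV Su) mulmxA TS mul1mx.
Qed.

Lemma similar_mx_refl M : similar_mx M M.
Proof. by apply: (similar_mx_intro (S := 1%:M) (T := 1%:M)); rewrite ?mulmx1 ?mul1mx. Qed.

Lemma similar_mx_sym M N : similar_mx M N -> similar_mx N M.
Proof.
case=> S Su ->; apply: (similar_mx_intro (mulmxV Su)).
by rewrite !mulmxA mulmxV // mul1mx -mulmxA mulmxV // mulmx1.
Qed.

Lemma similar_mx_trans M N K :
  similar_mx M N -> similar_mx N K -> similar_mx M K.
Proof.
case=> S Su ->; case=> S' S'u ->.
apply: (similar_mx_intro (S := S' *m S) (T := invmx S *m invmx S')); last first.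
  by rewrite !mulmxA.
by rewrite mulmxA -(mulmxA _ (invmx S')) mulVmx // mulmx1 mulVmx.
Qed.

Lemma similar_mx_idempotent M N :
  similar_mx M N -> N *m N = N -> M *m M = M.
Proof.
case=> S Su -> NN.
by rewrite !mulmxA -(mulmxA _ S) mulmxV // mulmx1 -(mulmxA _ N N) NN.
Qed.

End Similarity.

Lemma mxrank_mulmx_mid (F : fieldType) m n p q
    (A : 'M[F]_(m, n)) (B : 'M_(n, p)) (C : 'M_(p, q)) :
  (\rank (A *m B *m C) <= \rank B)%N.
Proof. exact: leq_trans (mxrankM_maxl _ _) (mxrankM_maxr _ _). Qed.

Lemma similar_mx_mxrank (R : comUnitRingType) (F : fieldType)
    (f : {rmorphism R -> F}) n (M N : 'M[R]_n) :
  similar_mx M N -> \rank (map_mx f M) = \rank (map_mx f N).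
Proof.
have le_rank M' N' :
    similar_mx M' N' -> (\rank (map_mx f M') <= \rank (map_mx f N'))%N.
  by case=> S _ ->; rewrite !map_mxM mxrank_mulmx_mid.
move=> sim; apply/eqP; rewrite eqn_leq !le_rank //; exact: similar_mx_sym.
Qed.

Lemma similar_pid_mx_rank (R : comUnitRingType) (F : fieldType)
    (f : {rmorphism R -> F}) n (P : 'M[R]_n) r :
  (r <= n)%N -> similar_mx P (pid_mx r) -> \rank (map_mx f P) = r.
Proof. by move=> rn /(similar_mx_mxrank f) ->; rewrite map_pid_mx rank_pid_mx. Qed.

Section BlockSimilarity.
Variables (R : comUnitRingType) (n : nat).

Lemma similar_block_mx1 (P Q : 'M[R]_n) : similar_mx P Q ->
  similar_mx (block_mx 1%:M 0 0 P : 'M_(1 + n)) (block_mx 1%:M 0 0 Q).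
Proof.
case=> S Su ->.
apply: (similar_mx_intro (S := block_mx 1%:M 0 0 S)
                         (T := block_mx 1%:M 0 0 (invmx S))).
  by rewrite mulmx_block !(mul0mx, mulmx0, mul1mx, addr0, add0r) mulVmx // -scalar_mx_block.
by rewrite !mulmx_block !(mul0mx, mulmx0, mul1mx, mulmx1, addr0, add0r).
Qed.

Lemma ublock_idempotent_similar_diag (r : 'M[R]_(1, n)) (P : 'M_n) :
    let M := block_mx 1%:M r 0 P : 'M_(1 + n) in
  M *m M = M -> P *m P = P /\ similar_mx M (block_mx 1%:M 0 0 P).
Proof.
move=> M; rewrite /M mulmx_block !(mul0mx, mulmx0, mul1mx, mulmx1, addr0, add0r).
case/eq_block_mx=> _ rrP _ PP.
have rP : r *m P = 0 by apply: (addrI r); rewrite addr0 rrP.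
split=> //.
apply: (similar_mx_intro (S := block_mx 1%:M r 0 1%:M)
                         (T := block_mx 1%:M (- r) 0 1%:M)).
  by rewrite mulmx_block !(mul0mx, mulmx0, mul1mx, mulmx1, addr0, add0r) subrr -scalar_mx_block.
by rewrite !mulmx_block !(mul0mx, mulmx0, mul1mx, mulmx1, addr0, add0r) mulNmx rP oppr0 addr0.
Qed.

End BlockSimilarity.

Lemma block_mx1_pid_mx (R : pzSemiRingType) n r :
  block_mx (1%:M : 'M[R]_1) 0 0 (pid_mx r : 'M_n) = pid_mx r.+1 :> 'M_(1 + n).
Proof.
apply/matrixP => i j; rewrite !mxE.
by case: splitP => i' ->; rewrite !mxE; case: splitP => j' ->; rewrite !mxE ?ord1.
Qed.

Section PlaneMx.
Variables (R : pzSemiRingType) (n : nat) (i j : 'I_n).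

Definition plane_mx (x y z t : R) : 'M[R]_n :=
  \matrix_(k, l) if k == i then (if l == i then x else if l == j then y else 0)
                 else if k == j then (if l == i then z else if l == j then t else 0)
                 else (k == l)%:R.

Hypothesis neq_ij : i != j.

Lemma mul_plane_mx x y z t m (M : 'M[R]_(n, m)) k l :
  (plane_mx x y z t *m M) k l =
    if k == i then x * M i l + y * M j l
    else if k == j then z * M i l + t * M j l else M k l.
Proof.
have neq_ji : j != i by rewrite eq_sym.
rewrite mxE (bigD1 i) // (bigD1 j) //= !mxE !eqxx (negbTE neq_ji).
have [-> | nki] := eqVneq k i.
  rewrite big1 ?addr0 // => p /andP[npi npj].
  by rewrite mxE eqxx (negbTE npi) (negbTE npj) mul0r.
have [-> | nkj] := eqVneq k j.
  rewrite big1 ?addr0 // => p /andP[npi npj].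
  by rewrite mxE eqxx (negbTE neq_ji) (negbTE npi) (negbTE npj) mul0r.
rewrite !mul0r !add0r (bigD1 k) /=; last by rewrite nki nkj.
rewrite mxE (negbTE nki) (negbTE nkj) eqxx mul1r big1 ?addr0 // => p /andP[_ npk].
by rewrite mxE (negbTE nki) (negbTE nkj) eq_sym (negbTE npk) mul0r.
Qed.

End PlaneMx.

Lemma plane_mx_unit (R : comUnitRingType) n (i j : 'I_n) (x y z t : R) :
  i != j -> x * t - y * z = 1 -> plane_mx i j x y z t \in unitmx.
Proof.
move=> neq_ij det1.
suff /mulmx1_unit[] :
    plane_mx i j x y z t *m plane_mx i j t (- y) (- z) x = 1%:M :> 'M[R]_n by [].
have neq_ji : (j == i) = false by apply/negbTE; rewrite eq_sym.
apply/matrixP => k l; rewrite mul_plane_mx // !mxE (negbTE neq_ij) neq_ji eqxx.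
have [eki | nki] := eqVneq k i; last have [ekj | nkj] := eqVneq k j;
  have [eli | nli] := eqVneq l i; have [elj | nlj] := eqVneq l j;
  rewrite ?eki ?ekj ?eli ?elj ?eqxx ?neq_ji ?(negbTE neq_ij) ?(negbTE nki) ?(negbTE nkj)
    ?(negbTE nli) ?(negbTE nlj) //=;
  rewrite ?mulr0 ?addr0 //;
  by [ring | rewrite -det1; ring | rewrite eq_sym ?(negbTE nli) ?(negbTE nlj)].
Qed.

Section Bezout.
Variable R : idomainType.
Hypothesis bezoutR : bezout_domain R.

Lemma bezout_factor (a b : R) :
  exists d a' b' x y, [/\ a = d * a', b = d * b' & x * a' + y * b' = 1].
Proof.
have [g gen] := bezoutR [:: a; b].
have [a' def_a] : exists r, a = r * g.
  by apply/gen; exists (fun k => (k == 0)%:R); rewrite !big_ord_recl big_ord0 /=; ring.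
have [b' def_b] : exists r, b = r * g.
  by apply/gen; exists (fun k => (k != 0)%:R); rewrite !big_ord_recl big_ord0 /=; ring.
have [c] := (gen g).2 (ex_intro _ 1 (esym (mul1r g))).
rewrite !big_ord_recl big_ord0 /= addr0 => eq_g.
have [g0 | nz_g] := eqVneq g 0.
  by exists 0, 1, 0, 1, 0; rewrite def_a def_b g0; split; ring.
exists g, a', b', (c ord0), (c (lift ord0 ord0)); rewrite def_a def_b; split; try ring.
by apply: (mulIf nz_g); rewrite mul1r [RHS]eq_g def_a def_b; ring.
Qed.

Lemma reduce_col_prefix n (w : 'cV[R]_n.+1) k : (k <= n)%N ->
  exists2 U, U \in unitmx & forall i : 'I_n.+1, (0 < i <= k)%N -> (U *m w) i 0 = 0.
Proof.
elim: k => [_ | k IH lt_k_n].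
  by exists 1%:M => [|[[|i] ?] /andP[]]; rewrite ?unitmx1.
have [U unitU Uw] := IH (ltnW lt_k_n).
pose j : 'I_n.+1 := Ordinal (lt_k_n : (k.+1 < n.+1)%N).
have neq_0j : ord0 != j by rewrite -val_eqE.
have [d [a' [b' [x [y [def_a def_b bez]]]]]] :=
  bezout_factor ((U *m w) ord0 0) ((U *m w) j 0).
exists (plane_mx ord0 j x y (- b') a' *m U).
  by rewrite unitmx_mul plane_mx_unit // ?unitU // -bez; ring.
move=> i /andP[i_gt0 le_i_k]; rewrite -mulmxA mul_plane_mx //.
have -> : (i == ord0) = false by apply/negbTE; rewrite -val_eqE /= -lt0n.
have [_ | neq_ij] := eqVneq i j; first by rewrite def_a def_b; ring.
apply: Uw; rewrite i_gt0 -ltnS ltn_neqAle le_i_k andbT.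
by apply: contraNneq neq_ij => eq_ik; apply/eqP/val_inj.
Qed.

Lemma reduce_col n (w : 'cV[R]_n.+1) :
  exists2 U, U \in unitmx & U *m w = (U *m w) ord0 0 *: delta_mx ord0 0.
Proof.
have [U unitU Uw] := reduce_col_prefix w (leqnn n).
exists U => //; apply/matrixP => i k.
rewrite ord1 [RHS]mxE [delta_mx _ _ _ _]mxE eqxx andbT.
have [-> | nz_i] := eqVneq i ord0; first by rewrite mulr1.
rewrite mulr0 Uw // -[(i <= n)%N]ltnS ltn_ord andbT lt0n.
by apply: contra nz_i => /eqP i0; apply/eqP/val_inj.
Qed.

Lemma idempotent_similar_ublock n (P : 'M[R]_(1 + n)) : P *m P = P -> P != 0 ->
  exists (r : 'M_(1, n)) (P' : 'M_n), similar_mx P (block_mx 1%:M r 0 P').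
Proof.
move=> PP /matrix0Pn[i [j nz_Pij]].
have [U unitU Uw] := reduce_col (col j P).
set d := (U *m col j P) ord0 0 in Uw.
pose M : 'M[R]_(1 + n) := U *m P *m invmx U.
have nz_d : d != 0.
  apply: contraNneq nz_Pij => d0.
  have : col j P = 0 by rewrite -[col j P]mul1mx -(mulVmx unitU) -mulmxA Uw d0 scale0r mulmx0.
  by move/matrixP/(_ i 0); rewrite !mxE => ->.
have Me : M *m delta_mx ord0 0 = delta_mx ord0 0 :> 'cV_(1 + n).
  have MUw : M *m (U *m col j P) = U *m col j P.
    by rewrite /M -!mulmxA mulKmx // colE (mulmxA P) PP.
  move: MUw; rewrite Uw -scalemxAr => /eqP; rewrite -subr_eq0 -scalerBr scalemx_eq0.
  by rewrite (negbTE nz_d) subr_eq0 => /eqP.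
have Mcol a : M a ord0 = (a == ord0)%:R.
  by move/matrixP/(_ a 0): Me; rewrite -colE !mxE eqxx andbT.
have simPM : similar_mx P M.
  apply: (similar_mx_intro (S := U) (T := invmx U)); first exact: mulVmx.
  by rewrite /M !mulmxA mulVmx // mul1mx -mulmxA mulVmx // mulmx1.
clearbody M; exists (ursubmx M), (drsubmx M).
have l0 : lshift n (0 : 'I_1) = ord0 by apply: val_inj.
rewrite -[M]submxK in simPM; congr (similar_mx _ (block_mx _ _ _ _)): simPM.
  by apply/matrixP => a b; rewrite !ord1 !mxE l0 Mcol.
by apply/matrixP => a b; rewrite !ord1 !mxE l0 Mcol.
Qed.

Lemma idempotent_similar_pid n (P : 'M[R]_n) :
  P *m P = P -> exists2 r, (r <= n)%N & similar_mx P (pid_mx r).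
Proof.
elim: n P => [|n IH] P PP.
  by exists 0%N => //; rewrite [P]flatmx0 [pid_mx 0]flatmx0; apply: similar_mx_refl.
have [-> | nz_P] := eqVneq P 0.
  by exists 0%N => //; rewrite pid_mx_0; apply: similar_mx_refl.
have [r [P' simP]] := idempotent_similar_ublock PP nz_P.
have [P'P' simP'] :=
  ublock_idempotent_similar_diag (similar_mx_idempotent (similar_mx_sym simP) PP).
have [s le_s_n simP's] := IH P' P'P'.
exists s.+1 => //; rewrite -block_mx1_pid_mx.
exact: similar_mx_trans simP (similar_mx_trans simP' (similar_block_mx1 simP's)).
Qed.

End Bezout.

Lemma group_inverse_idempotent (R : nzRingType) n (M X : 'M[R]_n) :
  is_group_inverse M X -> M *m X *m (M *m X) = M *m X.
Proof. by case=> _ _ MXM; rewrite mulmxA MXM. Qed.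

Lemma map_is_group_inverse (R S : nzRingType) (f : {rmorphism R -> S}) n
    (M X : 'M[R]_n) :
  is_group_inverse M X -> is_group_inverse (map_mx f M) (map_mx f X).
Proof. by case=> [MX XMX MXM]; split; rewrite -!map_mxM ?MXM ?XMX ?MX. Qed.

Section GroupInverseRank.
Variables (F : fieldType) (n : nat).
Implicit Types M N X : 'M[F]_n.

Lemma mxrank_mul_group_inverse M X : is_group_inverse M X -> \rank (M *m X) = \rank M.
Proof.
case=> _ _ MXM; apply/eqP; rewrite eqn_leq mxrankM_maxl /=.
by rewrite -{1}MXM mxrankM_maxl.
Qed.

Lemma mxrank_group_invertible_mulmxr M N X :
  is_group_inverse (M *m N) X -> \rank (M *m N *m M) = \rank (M *m N).
Proof.
case=> MNX _ MNXMN; apply/eqP; rewrite eqn_leq mxrankM_maxl /=.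
have def_MN : M *m N = X *m (M *m N *m M) *m N by rewrite -{1}MNXMN MNX !mulmxA.
by rewrite {1}def_MN mxrank_mulmx_mid.
Qed.

Lemma mxrank_group_invertible_mulmxl M N Y :
  is_group_inverse (N *m M) Y -> \rank (M *m N *m M) = \rank (N *m M).
Proof.
case=> NMY _ NMYNM.
have def_NM : N *m M = N *m (M *m N *m M) *m Y by rewrite -{1}NMYNM -mulmxA -NMY !mulmxA.
by apply/eqP; rewrite eqn_leq {2}def_NM mxrank_mulmx_mid andbT -mulmxA mxrankM_maxr.
Qed.

End GroupInverseRank.

Theorem corollary3p3 (R : idomainType) (n : nat) (A B C : 'M[R]_n) :
  bezout_domain R ->
  A *m B *m A = A *m C *m A ->
  group_invertible (A *m B) -> group_invertible (C *m A) ->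
  forall X Y : 'M[R]_n,
    is_group_inverse (A *m B) X -> is_group_inverse (C *m A) Y ->
    similar_mx ((A *m B) *m X) ((C *m A) *m Y).
Proof.
move=> bezoutR ABA_ACA _ _ X Y GX GY.
have [r le_r_n simP] := idempotent_similar_pid bezoutR (group_inverse_idempotent GX).
have [s le_s_n simQ] := idempotent_similar_pid bezoutR (group_inverse_idempotent GY).
suff eq_rs : r = s by apply: similar_mx_trans simP _; rewrite eq_rs; apply: similar_mx_sym.
pose f := @FracField.tofrac R.
have GXf := map_is_group_inverse f GX; have GYf := map_is_group_inverse f GY.
rewrite !map_mxM in GXf GYf.
rewrite -(similar_pid_mx_rank f le_r_n simP) -(similar_pid_mx_rank f le_s_n simQ) !map_mxM.
rewrite (mxrank_mul_group_inverse GXf) (mxrank_mul_group_inverse GYf).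
rewrite -(mxrank_group_invertible_mulmxr GXf) -(mxrank_group_invertible_mulmxl GYf).
by rewrite -!map_mxM ABA_ACA.
Qed.
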